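(* Under the hypergraph setup (with $Q(v,e)\in[0,1]$, $w(e)\in[0,1]$, $n_e\le E$ for every hyperedge $e$, $n_v\le D$ for every vertex $v$, and $\rho_{\max}=\sup_{x\in[0,E]}\rho(x)<\infty$), the generalized transition matrix satisfies $\|\tilde T\|_1\le\sqrt{1+\rho_{\max}ED}$, where $\|\cdot\|_1$ is the matrix norm induced by the vector $\ell_1$-norm (maximum absolute column sum).
   Context: Hypergraph setup: $\mathcal V=\{v_1,\dots,v_N\}$ is a finite vertex set and $\mathcal E$ a finite set of hyperedges (nonempty subsets of $\mathcal V$). $Q\in\mathbb{R}^{N\times|\mathcal E|}$ has entries $Q(v,e)\in[0,1]$ with $Q(v,e)=0$ whenever $v\notin e$. $W$ is the $|\mathcal E|\times|\mathcal E|$ diagonal matrix with entries $w(e)\in[0,1]$. $\delta(e)=\sum_{v}Q(v,e)$. $\rho:[0,\infty)\to[0,\infty)$ is a function and $\rho(D_{\mathcal E})$ is the diagonal matrix with entries $\rho(\delta(e))$. $\tilde d(v)=1+\sum_{e}w(e)Q(v,e)\delta(e)\rho(\delta(e))$ and $\tilde D_{\mathcal V}=\mathrm{diag}(\tilde d(v_1),\dots,\tilde d(v_N))$. The generalized transition matrix is $\tilde T=\tilde D_{\mathcal V}^{-1/2}\big(QW\rho(D_{\mathcal E})Q^\top+I\big)\tilde D_{\mathcal V}^{-1/2}$. $n_e$ denotes the number of vertices in $e$ and $n_v$ the number of hyperedges containing $v$. *)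

From mathcomp Require Import all_boot all_order all_algebra.
Set Implicit Arguments. Unset Strict Implicit. Unset Printing Implicit Defensive.
Import Order.TTheory GRing.Theory Num.Theory.
Local Open Scope ring_scope.

Section Hyper.
Variables (R : rcfType) (N M : nat).
Variables (Q : 'M[R]_(N, M)) (w : 'I_M -> R) (rho : R -> R).

Definition hdelta (e : 'I_M) : R := \sum_(v < N) Q v e.

Definition hdtilde (v : 'I_N) : R :=
  1 + \sum_(e < M) w e * Q v e * hdelta e * rho (hdelta e).

Definition hDinvsqrt : 'M[R]_N :=
  diag_mx (\row_(v < N) (Num.sqrt (hdtilde v))^-1).

Definition hWrho : 'M[R]_M := diag_mx (\row_(e < M) (w e * rho (hdelta e))).

Definition Ttilde : 'M[R]_N :=
  hDinvsqrt *m (Q *m hWrho *m Q^T + 1%:M) *m hDinvsqrt.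
End Hyper.

Definition norm1 (R : numDomainType) (n m : nat) (A : 'M[R]_(n, m)) : R :=
  \big[Num.max/0]_(j < m) \sum_(i < n) `|A i j|.

From mathcomp Require Import all_boot all_order all_algebra.
From mathcomp Require Import ring.
Import Order.TTheory GRing.Theory Num.Theory.
Local Open Scope ring_scope.

(* Write S := Q W rho(D_E) Q^T + I, a nonnegative matrix whose j-th column sums
   to d~(j) >= 1.  Since every d~(i) >= 1, the j-th column of
   T~ = D~^{-1/2} S D~^{-1/2} has sum at most d~(j) / sqrt(d~(j)) = sqrt(d~(j)),
   and d~(j) <= 1 + rho_max E D because j lies in at most D hyperedges, each
   contributing w(e) Q(j,e) delta(e) rho(delta(e)) <= E rho_max. *)

Lemma norm1_le (R : realDomainType) (n m : nat) (A : 'M[R]_(n, m)) (c : R) :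
  0 <= c -> (forall j, \sum_i `|A i j| <= c) -> norm1 A <= c.
Proof.
move=> c0 Ac; rewrite /norm1.
by elim/big_ind: _ => // x y xc yc; rewrite ge_max xc yc.
Qed.

Lemma mul_diag_mx_diag (R : pzRingType) (n : nat) (a b : 'rV[R]_n)
    (X : 'M[R]_n) i j :
  (diag_mx a *m X *m diag_mx b) i j = a 0 i * X i j * b 0 j.
Proof. by rewrite mul_mx_diag mxE mul_diag_mx mxE. Qed.

Section SymmetricNormalization.
Variables (R : rcfType) (n : nat) (B : 'M[R]_n) (d : 'I_n -> R).
Hypothesis B_ge0 : forall i j, 0 <= B i j.
Hypothesis d_ge1 : forall i, 1 <= d i.
Hypothesis colsum_B : forall j, \sum_i B i j = d j.

Let Dinvsqrt : 'M[R]_n := diag_mx (\row_i (Num.sqrt (d i))^-1).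

Let sqrt_d_gt0 i : 0 < Num.sqrt (d i).
Proof. by rewrite sqrtr_gt0 (lt_le_trans ltr01 (d_ge1 i)). Qed.

Let inv_sqrt_d_le1 i : (Num.sqrt (d i))^-1 <= 1.
Proof. by rewrite invf_le1 // -sqrtr1 ler_sqrt // (le_trans ler01 (d_ge1 i)). Qed.

Lemma colsum_normalize_le j :
  \sum_i `|(Dinvsqrt *m B *m Dinvsqrt) i j| <= Num.sqrt (d j).
Proof.
have inv_ge0 i : 0 <= (Num.sqrt (d i))^-1 by rewrite invr_ge0 ltW.
have entry_le i : `|(Dinvsqrt *m B *m Dinvsqrt) i j|
    <= B i j * (Num.sqrt (d j))^-1.
  rewrite mul_diag_mx_diag !mxE ger0_norm ?mulr_ge0 //.
  by rewrite ler_wpM2r // ler_piMl.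
apply: le_trans (ler_sum _ (fun i _ => entry_le i)) _.
have d_pos : 0 <= d j by rewrite (le_trans ler01).
by rewrite -mulr_suml colsum_B -{1}(sqr_sqrtr d_pos) expr2 mulfK ?sqrt_d_gt0 ?gt_eqF.
Qed.

Lemma norm1_normalize_le (c : R) :
  (forall j, d j <= c) -> norm1 (Dinvsqrt *m B *m Dinvsqrt) <= Num.sqrt c.
Proof.
move=> d_le; apply: norm1_le; first exact: sqrtr_ge0.
move=> j; apply: le_trans (colsum_normalize_le j) _.
by rewrite ler_sqrt ?d_le // (le_trans ler01 (le_trans (d_ge1 j) (d_le j))).
Qed.

End SymmetricNormalization.

Section Hypergraph.
Variables (R : rcfType) (N M : nat) (edge : 'I_M -> {set 'I_N}).
Variables (Q : 'M[R]_(N, M)) (w : 'I_M -> R) (rho : R -> R).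
Variables (E D : nat) (rho_max : R).
Hypothesis Q_bound : forall v e, 0 <= Q v e <= 1.
Hypothesis Q_support : forall v e, v \notin edge e -> Q v e = 0.
Hypothesis w_bound : forall e, 0 <= w e <= 1.
Hypothesis rho_ge0 : forall x, 0 <= x -> 0 <= rho x.
Hypothesis edge_size : forall e, (#|edge e| <= E)%N.
Hypothesis vertex_degree : forall v, (#|[set e | v \in edge e]| <= D)%N.
Hypothesis rho_le_max : forall x, 0 <= x <= E%:R -> rho x <= rho_max.

Let Q_ge0 v e : 0 <= Q v e. Proof. by case/andP: (Q_bound v e). Qed.
Let w_ge0 e : 0 <= w e. Proof. by case/andP: (w_bound e). Qed.

Lemma hdelta_ge0 e : 0 <= hdelta Q e.
Proof. exact: sumr_ge0. Qed.

Lemma hdelta_le e : hdelta Q e <= E%:R.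
Proof.
rewrite /hdelta (bigID (mem (edge e))) /= [X in _ + X]big1 ?addr0; last first.
  by move=> v /Q_support.
apply: le_trans (_ : \sum_(v in edge e) 1 <= _).
  by apply: ler_sum => v _; case/andP: (Q_bound v e).
by rewrite sumr_const ler_nat edge_size.
Qed.

Let rho_hdelta_ge0 e : 0 <= rho (hdelta Q e).
Proof. exact/rho_ge0/hdelta_ge0. Qed.

Lemma hdtilde_ge1 v : 1 <= hdtilde Q w rho v.
Proof.
by rewrite lerDl sumr_ge0 // => e _; rewrite !mulr_ge0 ?hdelta_ge0.
Qed.

Let rho_max_ge0 : 0 <= rho_max.
Proof. by rewrite (le_trans (rho_ge0 0 (lexx 0))) // rho_le_max // lexx ler0n. Qed.

Lemma hdtilde_summand_le v e :
  w e * Q v e * hdelta Q e * rho (hdelta Q e) <= E%:R * rho_max.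
Proof.
have rho_le : rho (hdelta Q e) <= rho_max by rewrite rho_le_max ?hdelta_ge0 ?hdelta_le.
have wQ_le1 : w e * Q v e <= 1.
  by case/andP: (w_bound e) => _ w1; case/andP: (Q_bound v e) => _ Q1; rewrite mulr_ile1.
apply: ler_pM => //; first by rewrite !mulr_ge0 ?hdelta_ge0.
by rewrite -[E%:R]mul1r ler_pM ?mulr_ge0 ?hdelta_ge0 ?hdelta_le.
Qed.

Lemma hdtilde_le v : hdtilde Q w rho v <= 1 + rho_max * E%:R * D%:R.
Proof.
rewrite /hdtilde lerD2l (bigID (fun e => v \in edge e)) /=.
rewrite [X in _ + X]big1 ?addr0; last by move=> e /Q_support ->; rewrite !mulr0 !mul0r.
rewrite (le_trans (ler_sum _ (fun e _ => hdtilde_summand_le v e))) //.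
rewrite sumr_const -[_ *+ _]mulr_natr (mulrC rho_max).
apply: ler_wpM2l; first by rewrite mulr_ge0.
rewrite ler_nat (leq_trans _ (vertex_degree v)) // subset_leq_card //.
by apply/subsetP => e; rewrite inE.
Qed.

Let S : 'M[R]_N := Q *m hWrho Q w rho *m Q^T + 1%:M.

Lemma hypergraph_adjacency_entry i j :
  S i j = \sum_e Q i e * (w e * rho (hdelta Q e)) * Q j e + (i == j)%:R.
Proof.
rewrite /S /hWrho mxE mul_mx_diag !mxE; congr (_ + _).
by apply: eq_bigr => e _; rewrite !mxE.
Qed.

Lemma hypergraph_adjacency_ge0 i j : 0 <= S i j.
Proof.
by rewrite hypergraph_adjacency_entry addr_ge0 ?ler0n // sumr_ge0 // => e _; rewrite !mulr_ge0.
Qed.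

Lemma colsum_hypergraph_adjacency j : \sum_i S i j = hdtilde Q w rho j.
Proof.
under eq_bigr do rewrite hypergraph_adjacency_entry.
rewrite big_split /= addrC /hdtilde (bigD1 j) //= eqxx big1 ?addr0; last first.
  by move=> i /negbTE ->.
congr (_ + _); rewrite exchange_big /=; apply: eq_bigr => e _.
by rewrite -!mulr_suml -/(hdelta Q e); ring.
Qed.

End Hypergraph.

Theorem proposition1 (R : rcfType) (N M : nat)
  (edge : 'I_M -> {set 'I_N}) (Q : 'M[R]_(N, M)) (w : 'I_M -> R)
  (rho : R -> R) (E D : nat) (rho_max : R) :
  injective edge ->
  (forall e, edge e != set0) ->
  (forall v e, 0 <= Q v e <= 1) ->
  (forall v e, v \notin edge e -> Q v e = 0) ->
  (forall e, 0 <= w e <= 1) ->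
  (forall x, 0 <= x -> 0 <= rho x) ->
  (forall e, (#|edge e| <= E)%N) ->
  (forall v, (#|[set e | v \in edge e]| <= D)%N) ->
  (forall x, 0 <= x <= E%:R -> rho x <= rho_max) ->
  (forall b, (forall x, 0 <= x <= E%:R -> rho x <= b) -> rho_max <= b) ->
  norm1 (Ttilde Q w rho) <= Num.sqrt (1 + rho_max * E%:R * D%:R).
Proof.
move=> _ _ Q_bound Q_support w_bound rho_ge0 edge_size vertex_degree rho_le_max _.
rewrite /Ttilde /hDinvsqrt; apply: norm1_normalize_le.
- exact: hypergraph_adjacency_ge0 Q_bound w_bound rho_ge0.
- exact: hdtilde_ge1 Q_bound w_bound rho_ge0.
- exact: colsum_hypergraph_adjacency.
- exact: hdtilde_le Q_bound Q_support w_bound rho_ge0 edge_size vertex_degree rho_le_max.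
Qed.
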